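(* Let $\Lambda,\Gamma$ be finite simplicial graphs and $f\colon V(\Lambda)\to V(\Gamma)$ a surjective map which is full (for all adjacent $u_1,u_2$ in $\Gamma$ and all $v_i\in f^{-1}(u_i)$, $v_1,v_2$ are adjacent in $\Lambda$) and satisfies condition $( * )$ (for all distinct non-adjacent $u\neq u'$ in $\Gamma$ and every $v\in f^{-1}(u)$ there is $v'\in f^{-1}(u')$ not adjacent to $v$). Suppose every fibre $f^{-1}(u)$ is a clique of $\Lambda$. Then the map sending each $u\in V(\Gamma)$ to the product of the elements of $f^{-1}(u)$ in $C(\Lambda)$ extends to an injective group homomorphism $\varphi\colon C(\Gamma)\hookrightarrow C(\Lambda)$, and $\varphi$ is a quasi-isometric embedding with respect to the word metrics given by the vertex generating sets.
   Context: For a finite simplicial graph $\Gamma$, the right-angled Coxeter group is $C(\Gamma)=\langle V(\Gamma)\mid v^2=1\ (v\in V(\Gamma)),\ [u,v]=1 \text{ iff }\{u,v\}\in E(\Gamma)\rangle$. A clique is a set of pairwise adjacent vertices. *)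

From Stdlib Require Import Relation_Operators.
From mathcomp Require Import all_boot.
Set Implicit Arguments. Unset Strict Implicit. Unset Printing Implicit Defensive.

Section RACG.
Variable T : finType.
Variable e : rel T.
Implicit Types (w : seq T).

(* One elementary move of the presentation
   < V | v^2 = 1, uv = vu for {u,v} in E >:
   delete / insert a square vv, or swap two adjacent letters u v with e u v. *)
Inductive rcox_step : seq T -> seq T -> Prop :=
| rcox_del a b v : rcox_step (a ++ v :: v :: b) (a ++ b)
| rcox_ins a b v : rcox_step (a ++ b) (a ++ v :: v :: b)
| rcox_comm a b u v : e u v -> rcox_step (a ++ u :: v :: b) (a ++ v :: u :: b).

Definition rcox_eq : seq T -> seq T -> Prop := clos_refl_sym_trans _ rcox_step.

Definition rcox_wlen (w : seq T) (n : nat) : Prop :=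
  (exists w', rcox_eq w w' /\ size w' = n) /\
  (forall w', rcox_eq w w' -> n <= size w').

(* n is the word-metric distance d(x, y) = |x^{-1} y|; x^{-1} is rev x
   since generators are involutions. *)
Definition rcox_dist (x y : seq T) (n : nat) : Prop := rcox_wlen (rev x ++ y) n.
End RACG.

Definition simplicial_graph (T : finType) (e : rel T) : Prop :=
  symmetric e /\ irreflexive e.

Definition fibre_word (V W : finType) (f : V -> W) (u : W) : seq V :=
  enum [pred v | f v == u].

Definition phi_word (V W : finType) (f : V -> W) (w : seq W) : seq V :=
  flatten (map (fibre_word f) w).

(* Call a word reduced if no letter v can be moved, past letters commuting
   with it, next to another copy of v.  By Tits' solution of the word problem,
   reduced words are geodesics.  To see this, let each generator v act on
   families of projections of words onto the dependent pairs {a, b} (a = b or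
   a, b non-adjacent) by cancelling v when it is a last letter and appending it
   otherwise: the relators act trivially, a reduced word acts on the empty
   family as its own projections, and the total length of the projections
   grows by at most one per letter.
   Since f is full and its fibres are cliques, phi respects the relators; by
   condition ( * ), a last letter of phi r lies over a last letter of r,
   so phi maps reduced words to reduced words.  Each generator goes to a word
   of length between 1 and #|V|, so phi has trivial kernel and distorts
   word lengths by a factor at most #|V|. *)

From Stdlib Require Import Relation_Definitions Relation_Operators Operators_Properties.
From Stdlib Require Import FunctionalExtensionality.
From mathcomp Require Import all_boot.
Set Implicit Arguments. Unset Strict Implicit. Unset Printing Implicit Defensive.

Lemma clos_rst_map (A B : Type) (r : relation A) (R : relation B) (g : A -> B) :
  equivalence B R -> (forall x y, r x y -> R (g x) (g y)) ->
  forall x y, clos_refl_sym_trans A r x y -> R (g x) (g y).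
Proof.
move=> [Rrefl Rtrans Rsym] gr x y.
elim=> {x y} [x y /gr | x | x y _ /Rsym | x y z _ Rxy _] //; exact: Rtrans.
Qed.

Section RightAngledCoxeter.
Variables (T : finType) (e : rel T).
Hypotheses (e_sym : symmetric e) (e_irr : irreflexive e).
Implicit Types (a b c u v : T) (s t p q x y z : seq T).

Notation req := (rcox_eq e).

Lemma req_refl s : req s s. Proof. exact: rst_refl. Qed.
Lemma req_sym s s' : req s s' -> req s' s. Proof. exact: rst_sym. Qed.
Lemma req_trans s1 s2 s3 : req s1 s2 -> req s2 s3 -> req s1 s3.
Proof. exact: rst_trans. Qed.
Lemma req_step s s' : rcox_step e s s' -> req s s'. Proof. exact: rst_step. Qed.

Lemma rcox_step_ctx p q s s' :
  rcox_step e s s' -> rcox_step e (p ++ s ++ q) (p ++ s' ++ q).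
Proof.
case=> [x y v|x y v|x y u v euv]; rewrite !catA -!(catA (p ++ x)) /=.
- exact: rcox_del.
- exact: rcox_ins.
- exact: rcox_comm.
Qed.

Lemma req_ctx p q s s' : req s s' -> req (p ++ s ++ q) (p ++ s' ++ q).
Proof.
apply: (clos_rst_map (g := fun s => p ++ s ++ q) (clos_rst_is_equiv _ _)).
by move=> {}s {}s' /(rcox_step_ctx p q)/req_step.
Qed.

Lemma req_ctxl p s s' : req s s' -> req (p ++ s) (p ++ s').
Proof. by move/(req_ctx p [::]); rewrite !cats0. Qed.

Lemma req_ctxr q s s' : req s s' -> req (s ++ q) (s' ++ q).
Proof. exact: (req_ctx [::] q). Qed.

Lemma req_move p q v x : all (e v) x -> req (p ++ x ++ v :: q) (p ++ v :: x ++ q).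
Proof.
elim: x p => [|c x IH] p /=; first by move=> _; exact: req_refl.
case/andP=> evc /(IH (rcons p c)); rewrite !cat_rcons => /req_trans; apply.
by apply/req_step/rcox_comm; rewrite e_sym.
Qed.

Lemma req_rev_cat_cancel s : req (rev s ++ s) [::].
Proof.
elim: s => [|a s IH] /=; first exact: req_refl.
rewrite rev_cons cat_rcons; apply: req_trans IH; exact/req_step/rcox_del.
Qed.

Lemma req_rev_catP s t : req s t <-> req (rev s ++ t) [::].
Proof.
split=> [st | st0].
  apply: req_trans (req_rev_cat_cancel s); apply: req_ctxl; exact: req_sym.
apply: (@req_trans _ (s ++ rev s ++ t)).
  by move/(req_ctxl s)/req_sym: st0; rewrite cats0.
by move/(req_ctxr t): (req_rev_cat_cancel (rev s)); rewrite revK -catA.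
Qed.

(** * Reduced words *)

(* Letters are examined from the right end of a word, hence the recursions
   over its reversal. *)
Fixpoint last_letter_rev (rs : seq T) v : bool :=
  if rs is a :: rs' then (a == v) || (e v a && last_letter_rev rs' v) else false.
Definition last_letter s v := last_letter_rev (rev s) v.

Fixpoint reduced_rev (rs : seq T) : bool :=
  if rs is a :: rs' then reduced_rev rs' && ~~ last_letter_rev rs' a else true.
Definition reduced s := reduced_rev (rev s).

Lemma last_letter_rcons s a v :
  last_letter (rcons s a) v = (a == v) || (e v a && last_letter s v).
Proof. by rewrite /last_letter rev_rcons. Qed.

Lemma reduced_rcons s v : reduced (rcons s v) = reduced s && ~~ last_letter s v.
Proof. by rewrite /reduced /last_letter rev_rcons. Qed.

Lemma reduced_catl s t : reduced (s ++ t) -> reduced s.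
Proof.
elim/last_ind: t => [|t c IH]; first by rewrite cats0.
by rewrite -rcons_cat reduced_rcons => /andP [/IH].
Qed.

Lemma adj_neq v x : all (e v) x -> all (predC1 v) x.
Proof.
by move=> /allP evx; apply/allP => a /evx; apply: contraTneq => ->; rewrite e_irr.
Qed.

Lemma last_letter_cat s z v : all (predC1 v) z ->
  last_letter (s ++ z) v = all (e v) z && last_letter s v.
Proof.
rewrite /last_letter rev_cat -(all_rev (predC1 v)) -(all_rev (e v)).
by elim: (rev z) => [|a y IH] //= /andP [/negbTE -> /IH ->]; rewrite andbA.
Qed.

Lemma last_letter_revP rs v :
  reflect (exists p x, rev rs = p ++ v :: x /\ all (e v) x) (last_letter_rev rs v).
Proof.
apply: (iffP idP).
  elim: rs => [|a rs IH] //= /orP [/eqP -> | /andP [eva /IH [p [x [E ex]]]]].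
    by exists (rev rs), [::]; rewrite rev_cons cats1.
  exists p, (rcons x a); split; first by rewrite rev_cons E rcons_cat.
  by rewrite all_rcons eva.
case=> p [x [/(congr1 rev)]]; rewrite revK => -> {rs}.
rewrite rev_cat rev_cons cat_rcons -all_rev.
by elim: (rev x) => [|a y IH] /=; rewrite ?eqxx // => /andP [-> /IH ->]; rewrite orbT.
Qed.

Lemma last_letterP s v :
  reflect (exists p x, s = p ++ v :: x /\ all (e v) x) (last_letter s v).
Proof. by apply: (iffP (last_letter_revP _ _)); rewrite revK. Qed.

Lemma last_letter_ins p x c v :
  e c v -> last_letter (p ++ x) c -> last_letter (p ++ v :: x) c.
Proof.
rewrite /last_letter !rev_cat rev_cons cat_rcons => ecv.
elim: (rev x) => [|a y IH] /=; first by move=> ->; rewrite ecv orbT.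
by case/orP => [-> // | /andP [-> /IH ->]]; rewrite orbT.
Qed.

Lemma reduced_del p v x : all (e v) x -> reduced (p ++ v :: x) -> reduced (p ++ x).
Proof.
elim/last_ind: x => [|x c IH]; first by rewrite cats0 cats1 reduced_rcons => _ /andP [].
rewrite all_rcons -rcons_cons -!rcons_cat !reduced_rcons => /andP [evc ex].
case/andP=> /(IH ex) -> /=; apply: contra; apply: last_letter_ins; by rewrite e_sym.
Qed.

(** * Projections onto dependent pairs *)

(* The projection is stored reversed, so that its head is the last letter. *)
Definition proj t a b : seq T :=
  if ~~ e a b then rev [seq c <- t | (c == a) || (c == b)] else [::].

Definition proj_last v (P : T -> T -> seq T) :=
  (P v v != [::]) && [forall b, ~~ e v b ==> (head v (P v b) == v)].

Definition act v (P : T -> T -> seq T) a b : seq T :=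
  if ~~ e a b && ((v == a) || (v == b)) then
    (if proj_last v P then behead (P a b) else v :: P a b)
  else P a b.

Lemma funext2 (P Q : T -> T -> seq T) : P =2 Q -> P = Q.
Proof. by move=> PQ; do 2!apply: functional_extensionality => ?; apply: PQ. Qed.

Lemma proj_rcons t c a b : proj (rcons t c) a b =
  if ~~ e a b && ((c == a) || (c == b)) then c :: proj t a b else proj t a b.
Proof.
rewrite /proj filter_rcons; case: (~~ e a b) => //=.
by case: ifP => _; rewrite ?rev_rcons.
Qed.

Lemma proj_lastE t v : proj_last v (proj t) = last_letter t v.
Proof.
elim/last_ind: t => [|t a IH]; first by rewrite /proj_last /proj e_irr.
rewrite last_letter_rcons /proj_last.
have [<-|anv] /= := eqVneq a v.
  rewrite proj_rcons e_irr eqxx /=; apply/forallP => b; apply/implyP => dab.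
  by rewrite proj_rcons dab eqxx.
case: (boolP (e v a)) => eva /=; last first.
  apply/negbTE/nandP; right; apply/forallPn; exists a.
  by rewrite eva proj_rcons eva eqxx orbT /= (negbTE anv).
have proj_rcons_va b : proj (rcons t a) v b = proj t v b.
  by rewrite proj_rcons (negbTE anv) /=; case: (eqVneq a b) => [<-|_]; rewrite ?eva ?andbF.
rewrite -IH /proj_last proj_rcons_va; congr (_ && _).
by apply: eq_forallb => b; rewrite proj_rcons_va.
Qed.

Lemma act_rcons t v : ~~ last_letter t v -> act v (proj t) = proj (rcons t v).
Proof.
rewrite -proj_lastE => /negbTE nlast.
by apply: funext2 => a b; rewrite /act nlast proj_rcons.
Qed.

Lemma nadj_pair a b c d :
  ~~ e a b -> (c == a) || (c == b) -> (d == a) || (d == b) -> ~~ e c d.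
Proof. by move=> nab /orP [] /eqP -> /orP [] /eqP ->; rewrite ?e_irr // e_sym. Qed.

Lemma proj_adj_nil a b v x : ~~ e a b -> (v == a) || (v == b) -> all (e v) x ->
  [seq c <- x | (c == a) || (c == b)] = [::].
Proof.
move=> nab vab /allP ex; apply/eqP; rewrite -[_ == _]negbK -has_filter.
by apply/hasPn => c /ex; apply: contraL => /(nadj_pair nab vab).
Qed.

Lemma act_cancel p x v : all (e v) x -> act v (proj (p ++ v :: x)) = proj (p ++ x).
Proof.
move=> ex; have last_v : proj_last v (proj (p ++ v :: x)).
  by rewrite proj_lastE; apply/last_letterP; exists p, x.
apply: funext2 => a b; rewrite /act last_v /proj.
case: (boolP (e a b)) => //= nab; case: ifP => vab.
  by rewrite !filter_cat /= (proj_adj_nil nab vab ex) vab cats0 rev_cat.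
by rewrite !filter_cat /= vab.
Qed.

Lemma proj_swap p q u w : e u w -> proj (p ++ u :: w :: q) = proj (p ++ w :: u :: q).
Proof.
move=> euw; apply: funext2 => a b; rewrite /proj.
case: ifP => // nab; rewrite !filter_cat /=.
case: ifP => uab; case: ifP => wab //.
by rewrite (negbTE (nadj_pair nab uab wab)) in euw.
Qed.

Lemma proj_move p x v : all (e v) x -> proj (p ++ x ++ [:: v]) = proj (p ++ v :: x).
Proof.
elim: x p => [|c x IH] p //= /andP [evc /(IH (rcons p c))].
by rewrite !cat_rcons => ->; apply: proj_swap; rewrite e_sym.
Qed.

Definition reduced_proj P := exists2 t, reduced t & P = proj t.

Lemma act_reduced_proj v P : reduced_proj P -> reduced_proj (act v P).
Proof.
case=> t red_t ->; case: (boolP (last_letter t v)) => [|nlast].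
  case/last_letterP=> p [x [Et ex]]; rewrite {t}Et in red_t *.
  by exists (p ++ x); [apply: reduced_del red_t | apply: act_cancel].
by exists (rcons t v); [rewrite reduced_rcons red_t | apply: act_rcons].
Qed.

Lemma act_involutive v P : reduced_proj P -> act v (act v P) = P.
Proof.
case=> t red_t ->; case: (boolP (last_letter t v)) => [|nlast]; last first.
  by rewrite act_rcons // -cats1 (act_cancel t (x := [::])) ?cats0.
case/last_letterP=> p [x [Et ex]]; rewrite {t}Et in red_t *.
have nlast : ~~ last_letter (p ++ x) v.
  rewrite last_letter_cat ?adj_neq // ex /=.
  by move: red_t; rewrite -cat_rcons => /reduced_catl; rewrite reduced_rcons => /andP [].
by rewrite act_cancel // act_rcons // -cats1 -catA proj_move.
Qed.

Lemma act_comm_act u w v P : reduced_proj P -> (v == u) || (v == w) ->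
  act u (act w P) = act w (act u P) -> act u (act w (act v P)) = act w (act u (act v P)).
Proof.
move=> RP /orP [] /eqP -> C; last first.
  by rewrite act_involutive // C act_involutive //; apply: act_reduced_proj.
have := congr1 (act u) C; rewrite act_involutive => [<-|]; last exact: act_reduced_proj.
by rewrite act_involutive.
Qed.

Lemma act_comm u w P : e u w -> reduced_proj P -> act u (act w P) = act w (act u P).
Proof.
(* By act_comm_act, last letters among u, w can be stripped off by induction
   on the length; when there are none, both sides append u and w. *)
move=> euw [t + ->]; have [n] := ubnP (size t); elim: n t => // n IH t.
rewrite ltnS => tn red_t.
have remove v : (v == u) || (v == w) -> last_letter t v ->
    act u (act w (proj t)) = act w (act u (proj t)).
  move=> uwv /last_letterP [p [x [Et ex]]].
  have red_px : reduced (p ++ x) by apply: reduced_del ex _; rewrite -Et.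
  have -> : proj t = act v (proj (p ++ x)).
    by rewrite -(act_cancel p ex) -Et act_involutive //; exists t.
  apply: act_comm_act uwv _; first by exists (p ++ x).
  by apply: IH red_px; move: tn; rewrite Et !size_cat /= addnS.
case: (boolP (last_letter t u)) => [|nu]; first by apply: remove; rewrite eqxx.
case: (boolP (last_letter t w)) => [|nw]; first by apply: remove; rewrite eqxx orbT.
have uw : u != w by apply: contraTneq euw => ->; rewrite e_irr.
rewrite !act_rcons //; first by rewrite -!cats1 -!catA /= proj_swap // e_sym.
all: by rewrite last_letter_rcons negb_or negb_and ?nu ?nw orbT andbT // eq_sym.
Qed.

Definition act_word s := foldl (fun P v => act v P) (proj [::]) s.

Lemma act_word_rcons s v : act_word (rcons s v) = act v (act_word s).
Proof. exact: foldl_rcons. Qed.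

Lemma act_word_reduced_proj s : reduced_proj (act_word s).
Proof.
elim/last_ind: s => [|s v IH]; first by exists [::].
by rewrite act_word_rcons; apply: act_reduced_proj.
Qed.

Lemma act_word_eq s s' : req s s' -> act_word s = act_word s'.
Proof.
apply: (clos_rst_map (g := act_word)
         (Build_equivalence _ _ (@erefl _) (@etrans _) (@esym _))).
move=> _ _ [p q v|p q v|p q u v euv]; rewrite /act_word !foldl_cat /= -/(act_word p).
- by rewrite act_involutive //; apply: act_word_reduced_proj.
- by rewrite act_involutive //; apply: act_word_reduced_proj.
- by rewrite (act_comm euv) //; apply: act_word_reduced_proj.
Qed.

Lemma act_word_reduced s : reduced s -> act_word s = proj s.
Proof.
elim/last_ind: s => [|s v IH] //; rewrite reduced_rcons => /andP [red_s nlast].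
by rewrite act_word_rcons IH // act_rcons.
Qed.

Definition proj_size (P : T -> T -> seq T) := \sum_a size (P a a).

Lemma proj_size_act v P : proj_size (act v P) <= (proj_size P).+1.
Proof.
rewrite /proj_size (bigD1 v) //= [X in _ <= X.+1](bigD1 v) //= -addSn.
apply: leq_add.
  rewrite /act e_irr eqxx /=; case: (proj_last v P) => //=.
  by rewrite size_behead (leq_trans (leq_pred _)).
apply/eq_leq/eq_bigr => a av.
by rewrite /act orbb eq_sym (negbTE av) andbF.
Qed.

Lemma proj_size_proj t : proj_size (proj t) = size t.
Proof.
rewrite /proj_size; elim: t => [|c t IH].
  by rewrite big1 // => a _; rewrite /proj e_irr.
have size_proj_cons a : size (proj (c :: t) a a) = (c == a) + size (proj t a a).
  by rewrite /proj e_irr /= orbb; case: (c == a); rewrite /= ?rev_cons ?size_rcons.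
rewrite (eq_bigr _ (fun a _ => size_proj_cons a)) big_split /= IH (bigD1 c) //= eqxx.
by rewrite big1 // => a; rewrite eq_sym => /negbTE ->.
Qed.

Lemma proj_size_act_word s : proj_size (act_word s) <= size s.
Proof.
elim/last_ind: s => [|s v IH]; first by rewrite /act_word /= proj_size_proj.
by rewrite act_word_rcons size_rcons (leq_trans (proj_size_act _ _)).
Qed.

Theorem reduced_size_min s s' : reduced s -> req s s' -> size s <= size s'.
Proof.
move=> red_s ss'; rewrite -proj_size_proj -act_word_reduced // (act_word_eq ss').
exact: proj_size_act_word.
Qed.

Lemma req_shorten s : ~~ reduced s -> exists2 s', req s s' & size s' < size s.
Proof.
elim/last_ind: s => [|s v IH] //; rewrite reduced_rcons negb_and negbK.
case/orP=> [/IH [s' ss' lt_s's] | /last_letterP [p [x [-> ex]]]].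
  by exists (rcons s' v); [rewrite -!cats1; apply: req_ctxr | rewrite !size_rcons].
exists (p ++ x); last by rewrite size_rcons !size_cat /= addnS ltnS leqnSn.
apply: (@req_trans _ (p ++ [:: v, v & x])).
  by move: (req_move (rcons p v) [::] ex); rewrite !cat_rcons cats0 -cats1 -catA.
exact/req_step/rcox_del.
Qed.

Lemma exists_reduced s : exists2 r, reduced r & req s r.
Proof.
have [n] := ubnP (size s); elim: n s => // n IH s; rewrite ltnS => sn.
have [red_s | /req_shorten [s' ss' lt_s's]] := boolP (reduced s).
  by exists s => //; apply: req_refl.
have [r red_r s'r] := IH s' (leq_trans lt_s's sn).
by exists r => //; apply: req_trans s'r.
Qed.

Lemma reduced_wlen r s n : reduced r -> req s r -> rcox_wlen e s n -> n = size r.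
Proof.
move=> red_r sr [[s' [ss' <-]] min_n]; apply/eqP; rewrite eqn_leq min_n //.
by apply: reduced_size_min red_r _; apply: req_trans ss'; apply: req_sym.
Qed.

(** * Cliques *)

Definition clique x := {in x &, forall a b, a != b -> e a b}.

Lemma clique_cons c x : clique (c :: x) -> clique x.
Proof. by move=> cx a b ax bx; apply: cx; rewrite inE ?ax ?bx orbT. Qed.

Lemma clique_cons_all c x : uniq (c :: x) -> clique (c :: x) -> all (e c) x.
Proof.
case/andP=> cx _ cl; apply/allP => a ax; apply: cl; rewrite ?inE ?eqxx ?ax ?orbT //.
by apply: contraNneq cx => ->.
Qed.

Lemma req_cancel_clique p q x : uniq x -> clique x -> req (p ++ x ++ x ++ q) (p ++ q).
Proof.
elim: x p => [|c x IH] p ux cx /=; first exact: req_refl.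
have ex := clique_cons_all ux cx; case/andP: ux => _ ux.
apply: (@req_trans _ (p ++ [:: c, c & x ++ x ++ q])).
  by move: (req_move (rcons p c) (x ++ q) ex); rewrite !cat_rcons.
apply: req_trans (IH p ux (clique_cons cx)); exact/req_step/rcox_del.
Qed.

Lemma req_rev_clique x : uniq x -> clique x -> req (rev x) x.
Proof.
elim: x => [|c x IH] ux cx; first exact: req_refl.
have ex := clique_cons_all ux cx; case/andP: ux => _ ux.
rewrite rev_cons -cats1; apply: req_trans (req_ctxr [:: c] (IH ux (clique_cons cx))) _.
by move: (req_move [::] [::] ex); rewrite /= cats0.
Qed.

Lemma req_swap_blocks p q x y : {in x & y, forall a b, e a b} ->
  req (p ++ x ++ y ++ q) (p ++ y ++ x ++ q).
Proof.
elim: x p => [|a x IH] p exy /=; first exact: req_refl.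
apply: (@req_trans _ (p ++ a :: y ++ x ++ q)).
  have exy' : {in x & y, forall a b, e a b}.
    by move=> c b cx; apply: exy; rewrite inE cx orbT.
  by move: (IH (rcons p a) exy'); rewrite !cat_rcons.
apply/req_sym/req_move/allP => b yb; apply: exy => //; exact: mem_head.
Qed.

Lemma reduced_cat_clique s y : reduced s -> uniq y -> clique y ->
  {in y, forall v, ~~ last_letter s v} -> reduced (s ++ y).
Proof.
elim/last_ind: y => [|y b IH]; first by rewrite cats0.
rewrite rcons_uniq => red_s /andP [yb uy] cy nlast.
have cy' : clique y by move=> a c ay yc; apply: cy; rewrite mem_rcons inE ?ay ?yc orbT.
rewrite -rcons_cat reduced_rcons IH //; last first.
  by move=> v yv; apply: nlast; rewrite mem_rcons inE yv orbT.
have nb : ~~ last_letter s b by apply: nlast; rewrite mem_rcons mem_head.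
rewrite last_letter_cat ?(negbTE nb) ?andbF //.
by apply/allP => a ya; apply: contraNneq yb => <-.
Qed.

End RightAngledCoxeter.

(** * The fibre map *)

Section FibreMap.
Variables (V W : finType) (eL : rel V) (eG : rel W) (f : V -> W).
Hypotheses (eL_sym : symmetric eL) (eL_irr : irreflexive eL).
Hypotheses (eG_sym : symmetric eG) (eG_irr : irreflexive eG).
Hypothesis f_surj : forall u : W, exists v : V, f v = u.
Hypothesis f_full : forall u1 u2 : W, eG u1 u2 ->
  forall v1 v2 : V, f v1 = u1 -> f v2 = u2 -> eL v1 v2.
Hypothesis f_star : forall u u' : W, u != u' -> ~~ eG u u' ->
  forall v : V, f v = u -> exists v' : V, f v' = u' /\ ~~ eL v v'.
Hypothesis f_fibre_clique : forall (u : W) (v1 v2 : V),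
  f v1 = u -> f v2 = u -> v1 != v2 -> eL v1 v2.
Implicit Types (u : W) (v : V) (r w x y : seq W).

Local Notation F := (fibre_word f).
Local Notation phi := (phi_word f).

Lemma mem_fibre_word v u : (v \in F u) = (f v == u).
Proof. by rewrite /fibre_word mem_enum inE. Qed.

Lemma fibre_word_uniq u : uniq (F u). Proof. exact: enum_uniq. Qed.

Lemma fibre_word_clique u : clique eL (F u).
Proof.
by move=> v1 v2; rewrite !mem_fibre_word => /eqP f1 /eqP f2; apply: f_fibre_clique f1 f2.
Qed.

Lemma size_fibre_word_gt0 u : 0 < size (F u).
Proof.
have [v fv] := f_surj u; rewrite lt0n size_eq0; apply: contraTneq isT => Fu0.
by have := mem_fibre_word v u; rewrite Fu0 fv eqxx.
Qed.

Lemma size_fibre_word_le u : size (F u) <= #|V|.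
Proof. by rewrite /fibre_word -cardE max_card. Qed.

Lemma phi_word_cons u w : phi (u :: w) = F u ++ phi w. Proof. by []. Qed.

Lemma phi_word_cat w1 w2 : phi (w1 ++ w2) = phi w1 ++ phi w2.
Proof. by rewrite /phi_word map_cat flatten_cat. Qed.

Lemma phi_word_rcons w u : phi (rcons w u) = phi w ++ F u.
Proof. by rewrite -cats1 phi_word_cat /phi_word /= cats0. Qed.

Lemma req_cancel_fibre (p q : seq V) u : rcox_eq eL (p ++ F u ++ F u ++ q) (p ++ q).
Proof.
apply: (req_cancel_clique eL_sym); [exact: fibre_word_uniq | exact: fibre_word_clique].
Qed.

Lemma phi_word_eq w1 w2 : rcox_eq eG w1 w2 -> rcox_eq eL (phi w1) (phi w2).
Proof.
apply: (clos_rst_map (R := rcox_eq eL) (g := phi) (clos_rst_is_equiv _ _)).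
move=> _ _ [p q u|p q u|p q u u' euu']; rewrite !phi_word_cat !phi_word_cons.
- exact: req_cancel_fibre.
- exact/req_sym/req_cancel_fibre.
- apply: (req_swap_blocks eL_sym) => v v'.
  by rewrite !mem_fibre_word => /eqP fv /eqP fv'; apply: f_full euu' _ _ fv fv'.
Qed.

Lemma phi_word_rev w : rcox_eq eL (rev (phi w)) (phi (rev w)).
Proof.
elim: w => [|u w IH]; first exact: req_refl.
rewrite phi_word_cons rev_cat rev_cons phi_word_rcons.
apply: req_trans (req_ctxr _ IH) (req_ctxl _ _).
apply: (req_rev_clique eL_sym); [exact: fibre_word_uniq | exact: fibre_word_clique].
Qed.

Lemma phi_word_rev_cat x y :
  rcox_eq eL (rev (phi x) ++ phi y) (phi (rev x ++ y)).
Proof. by rewrite phi_word_cat; apply/req_ctxr/phi_word_rev. Qed.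

Lemma last_letter_phi_word r v : last_letter eL (phi r) v -> last_letter eG r (f v).
Proof.
elim/last_ind: r => [|r u IH] //; rewrite phi_word_rcons last_letter_rcons.
have [//|ufv] /= := eqVneq u (f v).
rewrite last_letter_cat; last first.
  apply/allP => v' /[!mem_fibre_word] /eqP fv'.
  by apply: contraNneq ufv => v'v; rewrite -fv' v'v.
case/andP=> /allP adj_fibre /IH ->; rewrite andbT.
apply: contraT => nadj; have fvu : f v != u by rewrite eq_sym.
have [v' [fv' nvv']] := f_star fvu nadj erefl.
by rewrite adj_fibre ?mem_fibre_word ?fv' in nvv'.
Qed.

Lemma reduced_phi_word r : reduced eG r -> reduced eL (phi r).
Proof.
elim/last_ind: r => [|r u IH] //; rewrite reduced_rcons phi_word_rcons.
case/andP=> /IH red_phi nlast; apply: reduced_cat_clique => //.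
- exact: fibre_word_uniq.
- exact: fibre_word_clique.
move=> v /[!mem_fibre_word] /eqP fv.
by apply: contra nlast => /last_letter_phi_word; rewrite fv.
Qed.

Lemma size_phi_word_ge r : size r <= size (phi r).
Proof.
elim: r => [|u r IH] //=; rewrite phi_word_cons size_cat -add1n.
exact: leq_add (size_fibre_word_gt0 u) IH.
Qed.

Lemma size_phi_word_le r : size (phi r) <= #|V| * size r.
Proof.
elim: r => [|u r IH] /=; first by rewrite muln0.
by rewrite phi_word_cons size_cat mulnS leq_add // size_fibre_word_le.
Qed.

Lemma phi_word_trivial w : rcox_eq eL (phi w) [::] -> rcox_eq eG w [::].
Proof.
move=> phiw1; have [r red_r wr] := exists_reduced eG_sym w.
have phir1 : rcox_eq eL (phi r) [::].
  by apply: req_trans phiw1; apply/req_sym/phi_word_eq.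
have := reduced_size_min eL_sym eL_irr (reduced_phi_word red_r) phir1.
move/(leq_trans (size_phi_word_ge r)); rewrite leqn0 => /nilP r0.
by rewrite -r0.
Qed.

Lemma phi_word_inj w1 w2 : rcox_eq eL (phi w1) (phi w2) -> rcox_eq eG w1 w2.
Proof.
move/(req_rev_catP eL) => phi1; apply/(req_rev_catP eG)/phi_word_trivial.
exact: req_trans (req_sym (phi_word_rev_cat w1 w2)) phi1.
Qed.

Lemma phi_word_dist x y dG dL : rcox_dist eG x y dG ->
  rcox_dist eL (phi x) (phi y) dL -> dG <= dL <= #|V| * dG.
Proof.
move=> distG distL; have [r red_r xyr] := exists_reduced eG_sym (rev x ++ y).
have xyr_phi : rcox_eq eL (rev (phi x) ++ phi y) (phi r).
  exact: req_trans (phi_word_rev_cat x y) (phi_word_eq xyr).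
rewrite (reduced_wlen eG_sym eG_irr red_r xyr distG).
rewrite (reduced_wlen eL_sym eL_irr (reduced_phi_word red_r) xyr_phi distL).
by rewrite size_phi_word_ge size_phi_word_le.
Qed.

End FibreMap.

Theorem proposition6p2 (V W : finType) (eL : rel V) (eG : rel W) (f : V -> W) :
  simplicial_graph eL -> simplicial_graph eG ->
  (forall u : W, exists v : V, f v = u) ->
  (* full *)
  (forall u1 u2 : W, eG u1 u2 ->
     forall v1 v2 : V, f v1 = u1 -> f v2 = u2 -> eL v1 v2) ->
  (* condition ( * ) *)
  (forall u u' : W, u != u' -> ~~ eG u u' ->
     forall v : V, f v = u -> exists v' : V, f v' = u' /\ ~~ eL v v') ->
  (* fibres are cliques *)
  (forall (u : W) (v1 v2 : V), f v1 = u -> f v2 = u -> v1 != v2 -> eL v1 v2) ->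
  (* phi is a well-defined homomorphism C(Gamma) -> C(Lambda) *)
  (forall w1 w2 : seq W, rcox_eq eG w1 w2 -> rcox_eq eL (phi_word f w1) (phi_word f w2)) /\
  (* phi is injective *)
  (forall w1 w2 : seq W, rcox_eq eL (phi_word f w1) (phi_word f w2) -> rcox_eq eG w1 w2) /\
  (* phi is a quasi-isometric embedding for the word metrics *)
  (exists K C : nat, 0 < K /\
     forall (x y : seq W) (dG dL : nat),
       rcox_dist eG x y dG -> rcox_dist eL (phi_word f x) (phi_word f y) dL ->
       dG <= K * dL + C /\ dL <= K * dG + C).
Proof.
move=> [symL irrL] [symG irrG] surj full star clique.
split; first exact: phi_word_eq symL full clique.
split; first exact: phi_word_inj symL irrL symG surj full star clique.
exists #|V|.+1, 0; split=> // x y dG dL distG distL; rewrite !addn0.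
have /andP [le_dG_dL le_dL_dG] :=
  phi_word_dist symL irrL symG irrG surj full star clique distG distL.
split; first exact: leq_trans le_dG_dL (leq_pmull _ _).
by apply: leq_trans le_dL_dG _; rewrite leq_mul2r leqnSn orbT.
Qed.
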